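(* Let $\mathcal{H}$ be a hypertree, $T$ a host tree of $\mathcal{H}$, and $uv$ an edge of $T$. Then $I_\mathcal{H}(uv)$ is a basic set of $\mathcal{H}$. Moreover, every basic set of $\mathcal{H}$ is of the form $I_\mathcal{H}(uv)$ for some edge $uv$ of $T$.
   Context: A hypergraph $\mathcal{H}$ has a finite vertex set $V(\mathcal{H})$ and a finite family of nonempty subsets (edges). A host tree of $\mathcal{H}$ is a tree with vertex set $V(\mathcal{H})$ in which every edge of $\mathcal{H}$ induces a connected subgraph; $\mathcal{H}$ is a hypertree if it has a host tree. For $V'\subseteq V(\mathcal{H})$, $I_\mathcal{H}(V')$ is the intersection of all edges of $\mathcal{H}$ containing $V'$, or $V(\mathcal{H})$ if none does; $I_\mathcal{H}(uv)=I_\mathcal{H}(\{u,v\})$. A union of sets is connected if the intersection graph of the sets is connected. The completion $Comp(\mathcal{H})$ is the hypergraph without repeated edges on $V(\mathcal{H})$ whose edges are $V(\mathcal{H})$, all one-element subsets, and all proper subsets of $V(\mathcal{H})$ obtainable from edges of $\mathcal{H}$ by repeated nonempty intersections and connected unions. A basic set of $\mathcal{H}$ is an edge of $Comp(\mathcal{H})$ with more than one vertex that cannot be expressed as a connected union of strictly smaller edges of $Comp(\mathcal{H})$. *)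

From mathcomp Require Import all_boot.
Set Implicit Arguments. Unset Strict Implicit. Unset Printing Implicit Defensive.

(* A hypergraph on the vertex set T (a finType, V(H) = T) is given by a finite
   family (sequence, repetitions allowed) E of nonempty subsets of T. *)
Definition hypergraph (T : finType) (E : seq {set T}) : Prop :=
  forall e, e \in E -> e != set0.

Definition gadj (T : finType) (F : {set {set T}}) : rel T :=
  fun x y => (x != y) && ([set x; y] \in F).

Definition induces_connected (T : finType) (F : {set {set T}}) (S : {set T}) : Prop :=
  forall x y, x \in S -> y \in S ->
    connect (fun a b => [&& a \in S, b \in S & gadj F a b]) x y.

Definition is_tree (T : finType) (F : {set {set T}}) : Prop :=
  [/\ 0 < #|T|, (forall e, e \in F -> #|e| = 2),
      induces_connected F setT & #|F| = #|T| - 1].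

Definition host_tree (T : finType) (E : seq {set T}) (F : {set {set T}}) : Prop :=
  is_tree F /\ forall e, e \in E -> induces_connected F e.

Definition hypertree (T : finType) (E : seq {set T}) : Prop :=
  hypergraph E /\ exists F, host_tree E F.

(* I_H(V') : intersection of all edges containing V' (setT if there is none). *)
Definition IH (T : finType) (E : seq {set T}) (V' : {set T}) : {set T} :=
  \bigcap_(e <- E | V' \subset e) e.

(* The union of the family P is connected: the intersection graph of P is connected. *)
Definition family_connected (T : finType) (P : {set {set T}}) : Prop :=
  forall B C, B \in P -> C \in P ->
    connect (fun X Y => [&& X \in P, Y \in P & X :&: Y != set0]) B C.

Inductive obtainable (T : finType) (E : seq {set T}) : {set T} -> Prop :=
| obt_edge e : e \in E -> obtainable E e
| obt_cap A B : obtainable E A -> obtainable E B -> A :&: B != set0 ->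
    obtainable E (A :&: B)
| obt_cup (P : {set {set T}}) : P != set0 ->
    (forall A, A \in P -> obtainable E A) -> family_connected P ->
    obtainable E (\bigcup_(A in P) A).

Definition comp_edge (T : finType) (E : seq {set T}) (A : {set T}) : Prop :=
  A = setT \/ (exists x, A = [set x]) \/ (A \proper setT /\ obtainable E A).

Definition basic_set (T : finType) (E : seq {set T}) (A : {set T}) : Prop :=
  [/\ comp_edge E A, 1 < #|A| &
      ~ exists P : {set {set T}},
          [/\ P != set0, (forall B, B \in P -> comp_edge E B /\ B \proper A),
              family_connected P & \bigcup_(B in P) B = A]].

From mathcomp Require Import all_boot.
Set Implicit Arguments. Unset Strict Implicit. Unset Printing Implicit Defensive.

(* In a host tree every edge of H induces a subtree, and subtrees are closed
   under nonempty intersections and connected unions; so every edge A of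
   Comp(H) is a subtree, and if A contains both ends of a tree edge uv it
   contains I_H(uv).  Deleting uv disconnects the tree, hence a connected
   family of subtrees covering u and v has a member containing both: I_H(uv)
   is not a connected union of strictly smaller edges of Comp(H).  Conversely
   a basic set A is the connected union of the sets I_H(uv) over the tree
   edges uv inside A, so one of them must be A itself. *)


Definition bfs_step (T : finType) (e : rel T) (r : T) (X : {set T}) : {set T} :=
  r |: [set y | [exists z in X, e z y]].

(* One more than the distance from [r], for vertices reachable from [r]. *)
Definition bfs_depth (T : finType) (e : rel T) (r : T) : T -> nat :=
  fix_order (bfs_step e r).

Section Connect.
Variable T : finType.

Lemma connect_preserves (e : rel T) (Q : T -> Prop) :
  (forall x y, e x y -> Q x -> Q y) -> forall x y, connect e x y -> Q x -> Q y.
Proof.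
move=> eQ x y /connectP [p + ->]; elim: p x => //= z p IHp x /andP [exz pz] Qx.
exact: IHp pz (eQ _ _ exz Qx).
Qed.

Section Reach.
Variables (e : rel T) (r : T).
Hypothesis reach : forall y, connect e r y.

Let bfs_step_mono : {homo bfs_step e r : X Y / X \subset Y}.
Proof.
move=> X Y sXY; apply/setUS/subsetP => y; rewrite !inE => /exists_inP [z zX ezy].
by apply/exists_inP; exists z; rewrite ?(subsetP sXY).
Qed.

Lemma mem_fixset_bfs_step y : y \in fixset (bfs_step e r).
Proof.
pose Q z := z \in fixset (bfs_step e r).
apply: (connect_preserves (Q := Q) _ (reach y)) => [x z exz xQ|];
  rewrite /Q -(fixsetK bfs_step_mono) !inE.
  by apply/orP; right; apply/exists_inP; exists x.
by rewrite eqxx.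
Qed.

Lemma exists_parent y :
  y != r -> exists2 z, e z y & bfs_depth e r z < bfs_depth e r y.
Proof.
move=> yNr; have := in_iter_fix_orderE (bfs_step e r) y.
rewrite mem_fixset_bfs_step /bfs_depth.
case: (fix_order _ y) => [|k]; first by rewrite inE.
rewrite /= {1}/bfs_step !inE (negbTE yNr) /= => /exists_inP [z zk ezy].
by exists z; last exact: fix_order_small bfs_step_mono _ _ zk.
Qed.

End Reach.

End Connect.

Definition gadj_in (T : finType) (F : {set {set T}}) (S : {set T}) : rel T :=
  fun a b => [&& a \in S, b \in S & gadj F a b].

Section Graph.
Variables (T : finType) (F : {set {set T}}).

Lemma gadj_sym : symmetric (gadj F).
Proof. by move=> x y; rewrite /gadj eq_sym setUC. Qed.

Lemma gadj_neq u v : gadj F u v -> u != v.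
Proof. by case/andP. Qed.

(* Every vertex but [r] is sent injectively to the edge joining it to a parent
   of smaller depth. *)
Lemma card_edges_connected r : (forall y, connect (gadj F) r y) -> #|T|.-1 <= #|F|.
Proof.
move=> reach; pose depth := bfs_depth (gadj F) r.
pose par y := odflt y [pick z | gadj F z y && (depth z < depth y)].
have parP y : y != r -> gadj F (par y) y && (depth (par y) < depth y).
  move=> yNr; rewrite /par; case: pickP => [z //|none].
  by have [z ezy lt_zy] := exists_parent reach yNr; move: (none z); rewrite ezy lt_zy.
have par_inj : {in [set~ r] &, injective (fun y => [set y; par y])}.
  move=> y y'; rewrite !in_setC1 => yNr y'Nr eq_yy'; apply/eqP/negPn/negP => neq_yy'.
  have /andP [_ lt_y] := parP y yNr; have /andP [_ lt_y'] := parP y' y'Nr.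
  have : y \in [set y'; par y'] by rewrite -eq_yy' !inE eqxx.
  have : y' \in [set y; par y] by rewrite eq_yy' !inE eqxx.
  rewrite !inE (negbTE neq_yy') eq_sym (negbTE neq_yy') /= => /eqP y'E /eqP yE.
  rewrite -y'E -yE in lt_y lt_y'.
  by have := ltn_trans lt_y lt_y'; rewrite ltnn.
rewrite -(cardsC1 r) -(card_in_imset par_inj).
apply/subset_leq_card/subsetP => _ /imsetP [y + ->].
by rewrite in_setC1 => /parP /andP [/andP [_]]; rewrite setUC.
Qed.

Lemma connect_gadj_in_avoid (S : {set T}) u v a b :
  ~~ ([set u; v] \subset S) -> connect (gadj_in F S) a b ->
  connect (gadj (F :\ [set u; v])) a b.
Proof.
move=> uvNS; apply: connect_sub => c d /and3P [cS dS /andP [neq_cd cdF]].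
apply: connect1; rewrite /gadj in_setD1 neq_cd cdF andbT.
by apply: contraNneq uvNS => <-; rewrite subUset !sub1set cS dS.
Qed.

Lemma family_connected_transfer (P : {set {set T}}) (Q : T -> Prop) :
  family_connected P -> (forall B, B \in P -> {in B &, forall x y, Q x -> Q y}) ->
  {in \bigcup_(B in P) B &, forall x y, Q x -> Q y}.
Proof.
move=> Pconn QB x y /bigcupP [B1 B1P xB1] /bigcupP [B2 B2P yB2] Qx.
suff: forall z, z \in B2 -> Q z by apply.
pose QB2 (X : {set T}) := forall z, z \in X -> Q z.
apply: (connect_preserves (Q := QB2) _ (Pconn _ _ B1P B2P)).
  move=> X Y /and3P [_ YP /set0Pn [w /setIP [wX wY]]] QX z zY.
  exact: QB Y YP w z wY zY (QX w wX).
by move=> z zB1; apply: QB B1 B1P x z xB1 zB1 Qx.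
Qed.

Lemma bigcup_induces_connected (P : {set {set T}}) :
  (forall B, B \in P -> induces_connected F B) -> family_connected P ->
  induces_connected F (\bigcup_(B in P) B).
Proof.
move=> Bconn Pconn x y xU yU; set U := \bigcup_(B in P) B.
apply: (family_connected_transfer (Q := connect (gadj_in F U) x) Pconn _ xU yU)
  (connect0 _ x).
move=> B BP a b aB bB xa; apply: connect_trans xa (connect_sub _ (Bconn B BP a b aB bB)).
move=> c d /and3P [cB dB cd]; apply: connect1; rewrite /gadj_in cd andbT.
by apply/andP; split; apply/bigcupP; exists B.
Qed.

Lemma induces_connected_neighbour (A : {set T}) x :
  induces_connected F A -> 1 < #|A| -> x \in A -> exists2 y, y \in A & gadj F x y.
Proof.
move=> Aconn A_gt1 xA.
have [y yA neq_yx] : exists2 y, y \in A & y != x.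
  have [a [b [aA bA neq_ab]]] := card_gt1P A_gt1.
  by case: (eqVneq a x) => [eq_ax|]; [exists b; rewrite // -eq_ax eq_sym | exists a].
case/connectP: (Aconn x y xA yA) => [[|z p]] /=.
  by move=> _ eq_yx; rewrite eq_yx eqxx in neq_yx.
by case/andP=> /and3P [_ zA xz] _ _; exists z.
Qed.

End Graph.

Section Tree.
Variables (T : finType) (F : {set {set T}}).
Hypothesis treeF : is_tree F.

Lemma tree_connect x y : connect (gadj F) x y.
Proof.
case: treeF => _ _ Fconn _; apply: connect_sub (Fconn x y (in_setT x) (in_setT y)).
by move=> a b /and3P [_ _ ab]; apply: connect1.
Qed.

(* Otherwise [F :\ [set u; v]] would connect [T] with fewer than [#|T| - 1]
   edges. *)
Lemma tree_cut_edge u v : gadj F u v -> ~~ connect (gadj (F :\ [set u; v])) u v.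
Proof.
move=> uv; apply/negP => uv_conn; set G := F :\ [set u; v].
have conn_uv : {in [set u; v] &, forall a b, connect (gadj G) a b}.
  move=> a b; rewrite !inE => /orP [] /eqP -> /orP [] /eqP ->; rewrite ?connect0 //.
  by rewrite (sym_connect_sym (gadj_sym G)).
have FsubG : subrel (gadj F) (connect (gadj G)).
  move=> x y /andP [neq_xy xyF].
  have [eq_xy | neq_uv] := eqVneq [set x; y] [set u; v].
    by apply: conn_uv; rewrite -eq_xy (set21, set22).
  by apply: connect1; rewrite /gadj in_setD1 neq_uv neq_xy xyF.
have := card_edges_connected (fun y => connect_sub FsubG (tree_connect u y)).
have := cardsD1 [set u; v] F; rewrite (andP uv).2 -/G /=.
by case: treeF => _ _ _ ->; rewrite -subn1 => ->; rewrite add1n ltnn.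
Qed.

(* Follow a simple path of [A] from [x]; if its first step [xz] left [B], the
   rest of the path and [B] would join [z] to [x] without using [xz]. *)
Lemma tree_induces_connectedI (A B : {set T}) :
  induces_connected F A -> induces_connected F B -> induces_connected F (A :&: B).
Proof.
move=> Aconn Bconn x y; rewrite !inE => /andP [xA xB] /andP [yA yB].
case/connectP: (Aconn x y xA yA) => p0 pA0 eq_y; move: yB; rewrite {y yA}eq_y.
case: (shortenP pA0) => p pA uniq_p _ {p0 pA0}.
elim: p x xA xB pA uniq_p => [|z p IHp] x xA xB /=; first by move=> *; apply: connect0.
case/andP => /and3P [_ zA xz] pA /andP [xNzp uniq_p] yB.
have [zB | zNB] := boolP (z \in B).
  apply: connect_trans (connect1 _) (IHp z zA zB pA uniq_p yB).
  by rewrite /gadj_in !inE xA xB zA zB xz.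
case/negP: (tree_cut_edge xz); rewrite (sym_connect_sym (gadj_sym _)).
apply: (@connect_trans _ _ (last z p)).
  apply: (@connect_gadj_in_avoid _ _ (A :\ x)).
    by rewrite subUset sub1set !inE eqxx.
  have avoid_x : {in predC1 x &, subrel (gadj_in F A) (gadj_in F (A :\ x))}.
    move=> c d /[!inE] cNx dNx /and3P [cA dA cd].
    by rewrite /gadj_in !inE cNx dNx cA dA cd.
  apply/connectP; exists p => //; apply: (sub_in_path avoid_x _ pA).
  by apply/allP => w wp; apply: contraNneq xNzp => <-.
apply: (connect_gadj_in_avoid _ (Bconn _ _ yB xB)).
by rewrite subUset !sub1set (negbTE zNB) andbF.
Qed.

(* Otherwise every member lies on one side of the cut edge [uv]. *)
Lemma tree_edge_sub_member (P : {set {set T}}) u v :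
  gadj F u v -> (forall B, B \in P -> induces_connected F B) -> family_connected P ->
  u \in \bigcup_(B in P) B -> v \in \bigcup_(B in P) B ->
  exists2 B, B \in P & [set u; v] \subset B.
Proof.
move=> uv Bconn Pconn uU vU.
have [/exists_inP [B BP uvB] | noB] := boolP [exists B in P, [set u; v] \subset B].
  by exists B.
case/negP: (tree_cut_edge uv).
pose Q := connect (gadj (F :\ [set u; v])) u.
apply: (family_connected_transfer (Q := Q) Pconn _ uU vU (connect0 _ u)).
move=> B BP a b aB bB ua; apply: connect_trans ua _.
apply: connect_gadj_in_avoid (Bconn B BP a b aB bB).
by move/exists_inPn: noB; apply.
Qed.

End Tree.

Section IntersectionClosure.
Variable T : finType.

Lemma sub_IH (E : seq {set T}) (V' : {set T}) : V' \subset IH E V'.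
Proof.
apply/subsetP => x xV; rewrite /IH.
apply: (big_ind (fun S : {set T} => x \in S)) => [|S1 S2 xS1 xS2|e /subsetP]; last exact.
  exact: in_setT.
by rewrite inE xS1 xS2.
Qed.

Lemma IH_sub_edge (E : seq {set T}) (V' : {set T}) e :
  e \in E -> V' \subset e -> IH E V' \subset e.
Proof. by move=> eE sVe; rewrite /IH (big_rem e eE) /= sVe subsetIl. Qed.

Lemma IH_setT_or_obtainable (E : seq {set T}) (V' : {set T}) :
  V' != set0 -> IH E V' = setT \/ obtainable E (IH E V').
Proof.
case/set0Pn => x xV.
suff: forall s, {subset s <= E} -> IH s V' = setT \/ obtainable E (IH s V') by apply.
elim=> [|e s IHs] sE; first by left; rewrite /IH big_nil.
have {}IHs : IH s V' = setT \/ obtainable E (IH s V').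
  by apply: IHs => y ys; apply: sE; rewrite inE ys orbT.
rewrite /IH big_cons -/(IH s V'); case: ifP => // sVe; right.
have eE : e \in E := sE e (mem_head e s).
case: IHs => [-> | obt_s]; first by rewrite setIT; apply: obt_edge.
apply: obt_cap (obt_edge eE) obt_s _.
by apply/set0Pn; exists x; rewrite inE (subsetP sVe) // (subsetP (sub_IH s V')).
Qed.

Lemma comp_edge_IH (E : seq {set T}) (V' : {set T}) : V' != set0 -> comp_edge E (IH E V').
Proof.
move=> V'_neq0; have [-> | neqT] := eqVneq (IH E V') setT; first by left.
case: (IH_setT_or_obtainable E V'_neq0) => [eqT | obt]; first by rewrite eqT eqxx in neqT.
by right; right; rewrite properT.
Qed.

End IntersectionClosure.

Definition IH_closed (T : finType) (E : seq {set T}) (F : {set {set T}})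
    (A : {set T}) : Prop :=
  forall u v, gadj F u v -> [set u; v] \subset A -> IH E [set u; v] \subset A.

Definition edge_closures (T : finType) (E : seq {set T}) (F : {set {set T}})
    (A : {set T}) : {set {set T}} :=
  [set IH E [set u; v] | u in A, v in A & gadj F u v].

Section HostTree.
Variables (T : finType) (E : seq {set T}) (F : {set {set T}}).
Hypotheses (treeF : is_tree F) (hostE : forall e, e \in E -> induces_connected F e).

Lemma obtainable_host (A : {set T}) :
  obtainable E A -> induces_connected F A /\ IH_closed E F A.
Proof.
elim=> [e eE | A' B _ [A'conn A'cl] _ [Bconn Bcl] _ | P _ _ IHP Pconn].
- by split; [exact: hostE | move=> u v _; exact: IH_sub_edge].
- split; first exact: tree_induces_connectedI.
  by move=> u v uv; rewrite !subsetI => /andP [uvA uvB]; rewrite A'cl ?Bcl.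
- have Bconn B : B \in P -> induces_connected F B by case/IHP.
  split=> [|u v uv]; first exact: bigcup_induces_connected.
  rewrite subUset !sub1set => /andP [uU vU].
  have [B BP uvB] := tree_edge_sub_member treeF uv Bconn Pconn uU vU.
  exact: subset_trans ((IHP B BP).2 u v uv uvB) (bigcup_sup B BP).
Qed.

Lemma comp_edge_host (A : {set T}) :
  comp_edge E A -> induces_connected F A /\ IH_closed E F A.
Proof.
case=> [-> | [[a ->] | [_ /obtainable_host //]]]; split.
- move=> x y _ _; apply: connect_sub (tree_connect treeF x y) => c d cd.
  by apply: connect1; rewrite /= !in_setT.
- by move=> *; apply: subsetT.
- by move=> x y /set1P -> /set1P ->; apply: connect0.
- move=> u v /gadj_neq neq_uv; rewrite subUset !sub1set !inE.
  by case/andP => /eqP eq_u /eqP eq_v; rewrite eq_u eq_v eqxx in neq_uv.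
Qed.

Lemma basic_set_IH_edge u v : gadj F u v -> basic_set E (IH E [set u; v]).
Proof.
move=> uv; have uv_sub := sub_IH E [set u; v].
split.
- by apply: comp_edge_IH; apply/set0Pn; exists u; rewrite set21.
- by apply: leq_trans (subset_leq_card uv_sub); rewrite cards2 (gadj_neq uv).
case=> P [_ PB Pconn PU].
have Bconn B : B \in P -> induces_connected F B by case/PB => /comp_edge_host [].
have /andP [uU vU] : (u \in \bigcup_(B in P) B) && (v \in \bigcup_(B in P) B).
  by rewrite PU -!sub1set -subUset.
have [B BP uvB] := tree_edge_sub_member treeF uv Bconn Pconn uU vU.
have [/comp_edge_host [_ Bcl] ltB] := PB B BP.
by move: ltB; rewrite properE (Bcl u v uv uvB) andbF.
Qed.

Lemma edge_closuresP (A : {set T}) B :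
  reflect (exists u v, [/\ u \in A, v \in A, gadj F u v & B = IH E [set u; v]])
          (B \in edge_closures E F A).
Proof.
apply: (iffP imset2P).
  by move=> [u v uA /[!inE] /andP [vA uv] ->]; exists u, v.
by move=> [u [v [uA vA uv ->]]]; apply: (Imset2spec (x2 := v) uA); rewrite ?inE ?vA.
Qed.

Lemma mem_edge_closures (A : {set T}) u v :
  u \in A -> v \in A -> gadj F u v -> IH E [set u; v] \in edge_closures E F A.
Proof. by move=> uA vA uv; apply/edge_closuresP; exists u, v. Qed.

Lemma family_connected_edge_closures (A : {set T}) :
  induces_connected F A -> family_connected (edge_closures E F A).
Proof.
move=> Aconn _ _ /edge_closuresP [a [b [aA bA ab ->]]]
  /edge_closuresP [c [d [cA dA cd ->]]].
set P := edge_closures E F A.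
set R := fun X Y : {set T} => [&& X \in P, Y \in P & X :&: Y != set0].
have memIH x y : x \in IH E [set x; y] /\ y \in IH E [set x; y].
  by rewrite !(subsetP (sub_IH E _)) ?set21 ?set22.
suff: forall X, X \in P -> c \in X -> connect R (IH E [set a; b]) X.
  by apply; [exact: mem_edge_closures | exact: (memIH c d).1].
pose Q x := forall X, X \in P -> x \in X -> connect R (IH E [set a; b]) X.
apply: (connect_preserves (Q := Q) _ (Aconn a c aA cA)).
  move=> x z /and3P [xA zA xz] Qx X XP zX.
  have xzP : IH E [set x; z] \in P by exact: mem_edge_closures.
  apply: connect_trans (Qx _ xzP (memIH x z).1) (connect1 _).
  by rewrite /R xzP XP; apply/set0Pn; exists z; rewrite inE zX (memIH x z).2.
move=> X XP aX; apply: connect1; rewrite /R mem_edge_closures // XP /=.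
by apply/set0Pn; exists a; rewrite inE aX (memIH a b).1.
Qed.

Lemma bigcup_edge_closures (A : {set T}) :
  comp_edge E A -> 1 < #|A| -> \bigcup_(B in edge_closures E F A) B = A.
Proof.
move=> /comp_edge_host [Aconn Acl] A_gt1; apply/eqP; rewrite eqEsubset; apply/andP; split.
  apply/bigcupsP => _ /edge_closuresP [u [v [uA vA uv ->]]].
  by apply: Acl; rewrite // subUset !sub1set uA vA.
apply/subsetP => x xA; have [y yA xy] := induces_connected_neighbour Aconn A_gt1 xA.
apply/bigcupP; exists (IH E [set x; y]); first exact: mem_edge_closures.
by rewrite (subsetP (sub_IH E _)) ?set21.
Qed.

Lemma basic_set_eq_IH_edge (A : {set T}) :
  basic_set E A -> exists u v, gadj F u v /\ A = IH E [set u; v].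
Proof.
case=> Acomp A_gt1 notU; have [Aconn Acl] := comp_edge_host Acomp.
have [/edge_closuresP [u [v [_ _ uv eqA]]] | ANP] := boolP (A \in edge_closures E F A).
  by exists u, v.
case: notU; exists (edge_closures E F A); split.
- have [x xA] := card_gt0P (ltnW A_gt1).
  have [y yA xy] := induces_connected_neighbour Aconn A_gt1 xA.
  by apply/set0Pn; exists (IH E [set x; y]); apply: mem_edge_closures.
- move=> _ /edge_closuresP [u [v [uA vA uv ->]]].
  split; first by case: (basic_set_IH_edge uv).
  rewrite properEneq Acl ?subUset ?sub1set ?uA ?vA // andbT.
  by apply: contraNneq ANP => {1}<-; apply: mem_edge_closures.
- exact: family_connected_edge_closures.
- exact: bigcup_edge_closures.
Qed.

End HostTree.

Theorem mainTheorem4 (T : finType) (E : seq {set T}) (F : {set {set T}}) :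
  hypergraph E -> host_tree E F ->
  (forall u v : T, [set u; v] \in F -> basic_set E (IH E [set u; v])) /\
  (forall A : {set T}, basic_set E A ->
     exists u v : T, [set u; v] \in F /\ A = IH E [set u; v]).
Proof.
move=> _ [treeF hostE]; split=> [u v uvF | A /(basic_set_eq_IH_edge treeF hostE)].
  apply: (basic_set_IH_edge treeF hostE); rewrite /gadj uvF andbT.
  by case: treeF => _ /(_ _ uvF) + _ _; rewrite cards2; case: (u != v).
by case=> u [v [/andP [_ uvF] ->]]; exists u, v.
Qed.
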